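(* Let $G \leq \mathrm{Homeo}(\mathbb{S}^1)$ be a group whose action on $\mathbb{S}^1$ is minimal and not topologically free. Suppose that $G$ acts faithfully on a set $\Omega$ such that for every $\Delta \in \Omega^{\{2\}}$, the action of $G_\Delta$ on $\mathbb{S}^1$ is minimal. Then there exists $\omega \in \Omega$ such that the action of $G_\omega$ on $\mathbb{S}^1$ is not topologically free.
   Context: An action on $\mathbb{S}^1$ is minimal if every orbit is dense, and topologically free if the fixed point set of every non-trivial element has empty interior. $\Omega^{\{2\}}$ is the set of unordered pairs of elements of $\Omega$, $G_\Delta$ the pointwise stabilizer of $\Delta$, and $G_\omega$ the stabilizer of $\omega$. *)

From HB Require Import structures.
From mathcomp Require Import all_boot all_order all_algebra.
From mathcomp Require Import all_classical all_reals all_analysis.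
Set Implicit Arguments. Unset Strict Implicit. Unset Printing Implicit Defensive.
Import Order.TTheory GRing.Theory Num.Theory.
Import numFieldNormedType.Exports.
Local Open Scope classical_set_scope.
Local Open Scope ring_scope.

(* The unit circle S^1 in R^2 = R * R, with the subspace topology
   (set_type carries the initial topology of the inclusion). *)
Definition circle_set (R : realType) : set (R * R) :=
  [set p | p.1 ^+ 2 + p.2 ^+ 2 = 1].
Definition S1 (R : realType) : topologicalType := set_type (@circle_set R).

Section Generic.
Variable X : topologicalType.

Definition homeomorphism (f : X -> X) : Prop :=
  continuous f /\ exists g : X -> X, [/\ continuous g, cancel f g & cancel g f].

Definition homeo_subgroup (G : set (X -> X)) : Prop :=
  [/\ (forall g, G g -> homeomorphism g),
      G id,
      (forall g h, G g -> G h -> G (g \o h)) &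
      (forall g, G g -> exists h, [/\ G h, cancel g h & cancel h g])].

Definition minimal_action (H : set (X -> X)) : Prop :=
  forall x : X, dense [set h x | h in H].

Definition topologically_free (H : set (X -> X)) : Prop :=
  forall h, H h -> h <> id -> interior [set x | h x = x] = set0.

Definition is_action (Omega : Type) (G : set (X -> X))
    (act : (X -> X) -> Omega -> Omega) : Prop :=
  (forall w, act id w = w) /\
  (forall g h w, G g -> G h -> act (g \o h) w = act g (act h w)).

Definition faithful_action (Omega : Type) (G : set (X -> X))
    (act : (X -> X) -> Omega -> Omega) : Prop :=
  forall g, G g -> (forall w, act g w = w) -> g = id.

Definition stab (Omega : Type) (G : set (X -> X))
    (act : (X -> X) -> Omega -> Omega) (w : Omega) : set (X -> X) :=
  [set g | G g /\ act g w = w].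

Definition pair_stab (Omega : Type) (G : set (X -> X))
    (act : (X -> X) -> Omega -> Omega) (a b : Omega) : set (X -> X) :=
  [set g | [/\ G g, act g a = a & act g b = b]].
End Generic.

(* Suppose every point stabilizer G_w is topologically free, and pick g in G
   whose fixed-point set has nonempty interior W, and w with g w <> w.  For h
   in the pair stabilizer G_{w, g w}, the commutator g^-1 h g h^-1 fixes w and
   is the identity on W cap h(W); so whenever h moves some point of W into W,
   h commutes with g and hence maps W into W.  As the circle is connected, W
   has a boundary point b outside W; minimality of G_{w, g w} gives h with
   h b in W, and then both h and h^-1 preserve W, forcing b in W. *)

From HB Require Import structures.
From mathcomp Require Import all_boot all_order all_algebra.
From mathcomp Require Import all_classical all_reals all_analysis.
From mathcomp Require Import lra.
Set Implicit Arguments. Unset Strict Implicit. Unset Printing Implicit Defensive.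
Import Order.TTheory GRing.Theory Num.Theory.
Import numFieldNormedType.Exports.
Local Open Scope classical_set_scope.
Local Open Scope ring_scope.

Definition fixset (X : Type) (f : X -> X) : set X := [set x | f x = x].

Lemma connected_open_boundary (X : topologicalType) (W : set X) :
  connected [set: X] -> open W -> W !=set0 -> W != setT ->
  exists2 b, closure W b & ~ W b.
Proof.
move=> Xconn oW W0 WnT; apply: contrapT => noboundary.
have cW : closed W.
  rewrite closure_id; apply/seteqP; split; first exact: subset_closure.
  by move=> b cb; apply: contrapT => nWb; apply: noboundary; exists b.
move/eqP: WnT; apply; apply: Xconn => //.
  by exists W => //; rewrite setTI.
by exists W => //; rewrite setTI.
Qed.

Lemma connected_S1 (R : realType) : connected [set: S1 R].
Proof.
pose phi (t : R) : S1 R :=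
  SigSub (mem_set (cos2Dsin2 t) : (cos t, sin t) \in @circle_set R).
have phi_cont : continuous phi.
  apply: (@continuous_comp_initial _ _ _ set_val) => t.
  by apply: (@cvg_pair _ _ _ _ (nbhs (cos t)) (nbhs (sin t)));
    [exact: continuous_cos | exact: continuous_sin].
have phi_surj : phi @` setT = setT.
  apply/seteqP; split => // -[[x y] xy_circle] _.
  have xy1 : x ^+ 2 + y ^+ 2 = 1 := set_mem xy_circle.
  have x_bound : -1 <= x <= 1 by apply/andP; split; nra.
  have cos_acos : cos (acos x) = x by apply: acosK; rewrite in_itv.
  have sin_acos : sin (acos x) = `|y|.
    by rewrite sin_acos // (_ : 1 - x ^+ 2 = y ^+ 2) ?sqrtr_sqr //; lra.
  have [y_ge0|y_lt0] := leP 0 y.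
    by exists (acos x) => //; apply: val_inj;
      rewrite /= cos_acos sin_acos ger0_norm.
  exists (- acos x) => //; apply: val_inj.
  by rewrite /= cosN sinN cos_acos sin_acos ltr0_norm // opprK.
rewrite -phi_surj; apply: connected_continuous_connected.
  by apply/connected_intervalP.
exact/continuous_subspaceT.
Qed.

Section FixedPointInteriors.
Variable X : topologicalType.

Lemma not_topologically_freeP (H : set (X -> X)) :
  ~ topologically_free H -> exists g, [/\ H g, g <> id & (fixset g)° !=set0].
Proof.
move=> Hntf; apply: contrapT => none; apply: Hntf => g Hg g_nid.
by apply: contrapT => /eqP/set0P W0; apply: none; exists g.
Qed.

Lemma topologically_free_id (H : set (X -> X)) c (V : set X) :
  topologically_free H -> H c -> open V -> V !=set0 -> V `<=` fixset c -> c = id.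
Proof.
move=> Hfree Hc oV [v Vv] Vfix; apply: contrapT => c_nid.
have := Hfree c Hc c_nid; apply/eqP/set0P; exists v.
by apply: filterS Vfix _; apply: open_nbhs_nbhs.
Qed.

Lemma commute_interior_fixset (g h hi : X -> X) :
  continuous hi -> cancel h hi -> cancel hi h -> h \o g = g \o h ->
  {homo h : y / (fixset g)° y}.
Proof.
move=> hi_cont hK hiK gh_comm y Wy.
have : nbhs (h y) (hi @^-1` fixset g) by apply: hi_cont; rewrite hK.
apply: filterS => z /= gz.
rewrite /fixset /= in gz *.
by have /= := congr1 (@^~ (hi z)) gh_comm; rewrite gz hiK.
Qed.

Variables (G : set (X -> X)) (Omega : Type) (act : (X -> X) -> Omega -> Omega).
Hypotheses (HG : homeo_subgroup G) (Hact : is_action G act).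

Let G_cont f : G f -> continuous f.
Proof. by case: HG => Ghomeo _ _ _ /Ghomeo []. Qed.

Let G_comp f g : G f -> G g -> G (f \o g).
Proof. by case: HG => _ _ Gcomp _; exact: Gcomp. Qed.

Let G_inv g : G g -> exists gi, [/\ G gi, cancel g gi & cancel gi g].
Proof. by case: HG => _ _ _ Ginv; exact: Ginv. Qed.

Let act_comp g h w : G g -> G h -> act (g \o h) w = act g (act h w).
Proof. by case: Hact => _ Hcomp; exact: Hcomp. Qed.

Lemma actK g gi w : G g -> G gi -> cancel g gi -> act gi (act g w) = w.
Proof.
move=> Gg Ggi gK; have giKg : gi \o g = id by apply: funext => x /=; rewrite gK.
by rewrite -act_comp // giKg (proj1 Hact).
Qed.

Lemma pair_stab_inv a b h : pair_stab G act a b h ->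
  exists hi, [/\ pair_stab G act a b hi, cancel h hi & cancel hi h].
Proof.
case=> Gh ha hb; have [hi [Ghi hK hiK]] := G_inv Gh.
by exists hi; split => //; split; [| rewrite -{1}ha | rewrite -{1}hb]; rewrite ?actK.
Qed.

Lemma pair_stab_commute w g h : topologically_free (stab G act w) -> G g ->
  pair_stab G act w (act g w) h -> (exists x, (fixset g)° x /\ (fixset g)° (h x)) ->
  h \o g = g \o h.
Proof.
move=> Hfree Gg Hh [x [Wx Whx]].
have [hi [[Ghi hiw _] hK hiK]] := pair_stab_inv Hh.
have [Gh _ hgw] := Hh; have [gi [Ggi gK giK]] := G_inv Gg.
pose c := gi \o (h \o (g \o hi)).
have c_stab : stab G act w c.
  have Gghi := G_comp Gg Ghi; have Ghghi := G_comp Gh Gghi.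
  split; first exact: G_comp.
  rewrite (act_comp w Ggi Ghghi) (act_comp w Gh Gghi) (act_comp w Gg Ghi).
  by rewrite hiw hgw actK.
have c_id : c = id.
  apply: (topologically_free_id Hfree c_stab
    (V := (fixset g)° `&` hi @^-1` (fixset g)°)).
  - apply: openI; first exact: open_interior.
    by apply: open_comp; [move=> z _; exact: G_cont | exact: open_interior].
  - by exists (h x); split => //=; rewrite hK.
  move=> z [Wz Whiz]; rewrite /fixset /c /=.
  by rewrite (interior_subset Whiz) hiK -{1}(interior_subset Wz) gK.
apply: funext => z; have := congr1 (fun f => g (f (h z))) c_id.
by rewrite /c /= hK giK.
Qed.

Lemma pair_stab_homo_interior w g h : topologically_free (stab G act w) -> G g ->
  pair_stab G act w (act g w) h -> (exists x, (fixset g)° x /\ (fixset g)° (h x)) ->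
  {homo h : y / (fixset g)° y}.
Proof.
move=> Hfree Gg Hh Wmeet; have [hi [[Ghi _ _] hK hiK]] := pair_stab_inv Hh.
exact: commute_interior_fixset (G_cont Ghi) hK hiK (pair_stab_commute Hfree Gg Hh Wmeet).
Qed.

Theorem connected_exists_stab_not_topologically_free :
  connected [set: X] -> ~ topologically_free G -> faithful_action G act ->
  (forall a b : Omega, a <> b -> minimal_action (pair_stab G act a b)) ->
  exists w : Omega, ~ topologically_free (stab G act w).
Proof.
move=> Xconn Hntf Hfaith Hpairs; apply: contrapT => all_free.
have Hfree w : topologically_free (stab G act w).
  by apply: contrapT => Hw; apply: all_free; exists w.
have [g [Gg g_nid W0]] := not_topologically_freeP Hntf.
have [w gw] : exists w, act g w <> w.
  apply: contrapT => none; apply: g_nid; apply: Hfaith => // w.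
  by apply: contrapT => gw; apply: none; exists w.
have WnT : (fixset g)° != setT.
  apply/eqP => WT; apply: g_nid; apply: funext => x.
  by apply: (@interior_subset _ (fixset g)); rewrite WT.
have [b cWb nWb] := connected_open_boundary Xconn (@open_interior _ _) W0 WnT.
have [y [Wy [h Hh hby]]] :=
  Hpairs w (act g w) (fun e => gw (esym e)) b _ W0 (@open_interior _ _).
subst y.
have [hi [Hhi hK _]] := pair_stab_inv Hh.
have [x [Wx Whx]] : exists x, (fixset g)° x /\ (fixset g)° (h x).
  have [Gh _ _] := Hh; apply: cWb; apply: (G_cont Gh).
  by apply: open_nbhs_nbhs; split => //; exact: open_interior.
have hi_homo := pair_stab_homo_interior (Hfree w) Gg Hhi.
by apply: nWb; rewrite -(hK b); apply: hi_homo => //; exists (h x); rewrite hK.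
Qed.

End FixedPointInteriors.

Theorem lemma4p4 (R : realType) (G : set (S1 R -> S1 R)) (Omega : Type)
  (act : (S1 R -> S1 R) -> Omega -> Omega)
  (HG : homeo_subgroup G)
  (Hmin : minimal_action G)
  (Hntf : ~ topologically_free G)
  (Hact : is_action G act)
  (Hfaith : faithful_action G act)
  (Hpairs : forall a b : Omega, a <> b -> minimal_action (pair_stab G act a b)) :
  exists w : Omega, ~ topologically_free (stab G act w).
Proof.
exact: connected_exists_stab_not_topologically_free HG Hact (@connected_S1 R)
  Hntf Hfaith Hpairs.
Qed.
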